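(* Let $\mathcal{O}\subset\mathbb{R}^{2}$ be an oval with support parametrization $\gamma$ and centrix $\mathbf{c}:S^{1}\to\mathbb{R}^{2}$. Then $\mathbf{c}$ coincides with the even part $\frac12(\gamma(\theta)+\gamma(\theta+\pi))$ of $\gamma$. Moreover $\mathbf{c}$ is constant if and only if $\mathcal{O}$ is central, and in that case, writing $\mathbf{c}$ for this constant, the odd part $\frac12(\gamma(\theta)-\gamma(\theta+\pi))$ of $\gamma$ support-parametrizes the origin-centered oval $\mathcal{O}-\mathbf{c}$.
   Context: Identify $\mathbb{R}^{2}\cong\mathbb{C}$. An oval is a $C^{2}$ embedded closed plane curve with nowhere-vanishing curvature; it is central if invariant under reflection through some point. A map $\gamma:S^{1}\to\mathbb{R}^{2}$ (viewed as $2\pi$-periodic on $\mathbb{R}$) support-parametrizes $\mathcal{O}$ if it parametrizes $\mathcal{O}$ and $\gamma'(\theta)=|\gamma'(\theta)|\,ie^{i\theta}$ for all $\theta$ (it is the inverse of the outer unit normal map). For $\theta$, the $\theta$-diameter of $\mathcal{O}$ is the segment joining the two points of $\mathcal{O}$ whose tangent lines are perpendicular to $e^{i\theta}$; $\mathbf{c}(\theta)$ is its midpoint, and the map $\mathbf{c}$ is the centrix. *)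

From Stdlib Require Import Reals.
From Coquelicot Require Import Coquelicot.
Open Scope R_scope.

Definition pt : Type := (R * R)%type.

Definition padd (p q : pt) : pt := (fst p + fst q, snd p + snd q).
Definition psub (p q : pt) : pt := (fst p - fst q, snd p - snd q).
Definition pscale (a : R) (p : pt) : pt := (a * fst p, a * snd p).
Definition pdot (p q : pt) : R := fst p * fst q + snd p * snd q.
Definition pnorm (p : pt) : R := sqrt (pdot p p).

(* e^{i theta} and i e^{i theta} *)
Definition expi (th : R) : pt := (cos th, sin th).
Definition iexpi (th : R) : pt := (- sin th, cos th).

Definition cx (g : R -> pt) (t : R) : R := fst (g t).
Definition cy (g : R -> pt) (t : R) : R := snd (g t).

Definition derivable2 (g : R -> pt) (t : R) : Prop :=
  ex_derive (cx g) t /\ ex_derive (cy g) t.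

Definition dcurve (g : R -> pt) (t : R) : pt :=
  (Derive (cx g) t, Derive (cy g) t).
Definition ddcurve (g : R -> pt) (t : R) : pt :=
  (Derive (Derive (cx g)) t, Derive (Derive (cy g)) t).

Definition C1_real (f : R -> R) : Prop :=
  forall t, ex_derive f t /\ continuous (Derive f) t.
Definition C2_real (f : R -> R) : Prop :=
  forall t, ex_derive f t /\ ex_derive (Derive f) t
            /\ continuous (Derive (Derive f)) t.
Definition C1_curve (g : R -> pt) : Prop := C1_real (cx g) /\ C1_real (cy g).
Definition C2_curve (g : R -> pt) : Prop := C2_real (cx g) /\ C2_real (cy g).

Definition pset : Type := pt -> Prop.

(* g : R -> R^2, L-periodic, parametrizes O, i.e. induces a bijection
   from the circle R/LZ onto O. *)
Definition parametrizes (L : R) (g : R -> pt) (O : pset) : Prop :=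
  0 < L /\
  (forall t, g (t + L) = g t) /\
  (forall s t, 0 <= s < L -> 0 <= t < L -> g s = g t -> s = t) /\
  (forall p, O p <-> exists t, g t = p).

Definition regular_param (L : R) (g : R -> pt) (O : pset) : Prop :=
  parametrizes L g O /\ C1_curve g /\ (forall t, dcurve g t <> (0, 0)).

(* Oval: C^2 embedded closed curve with nowhere-vanishing curvature
   (curvature = det(g',g'')/|g'|^3, so it vanishes iff det(g',g'') = 0). *)
Definition is_oval (O : pset) : Prop :=
  exists L g, regular_param L g O /\ C2_curve g /\
    (forall t, fst (dcurve g t) * snd (ddcurve g t)
               - snd (dcurve g t) * fst (ddcurve g t) <> 0).

Definition is_central (O : pset) : Prop :=
  exists z : pt, forall p, O p -> O (psub (pscale 2 z) p).

Definition support_param (O : pset) (gam : R -> pt) : Prop :=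
  parametrizes (2 * PI) gam O /\
  (forall th, derivable2 gam th) /\
  (forall th, dcurve gam th = pscale (pnorm (dcurve gam th)) (iexpi th)).

Definition tangent_at (O : pset) (p v : pt) : Prop :=
  exists L g t, regular_param L g O /\ g t = p /\ v = dcurve g t.

Definition tangent_perp (O : pset) (th : R) (p : pt) : Prop :=
  O p /\ exists v, tangent_at O p v /\ pdot v (expi th) = 0.

Definition midpoint (p q : pt) : pt := pscale (/ 2) (padd p q).

Definition is_centrix (O : pset) (c : R -> pt) : Prop :=
  forall th, exists p q : pt, p <> q /\
    (forall r, tangent_perp O th r <-> (r = p \/ r = q)) /\
    c th = midpoint p q.

Definition even_part (gam : R -> pt) (th : R) : pt :=
  pscale (/ 2) (padd (gam th) (gam (th + PI))).
Definition odd_part (gam : R -> pt) (th : R) : pt :=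
  pscale (/ 2) (psub (gam th) (gam (th + PI))).

Definition translate_neg (O : pset) (c : pt) : pset := fun p => O (padd p c).

(* Along a support parametrization the speed is a nonnegative multiple of
   [i e^{i th}], so [s |-> <gam s, e^{i th}>] has derivative
   [|gam'(s)| sin (th - s)]: it increases up to [th] and decreases after.
   Hence [gam th] maximizes and [gam (th + PI)] minimizes the height
   [<., e^{i th}>] on the oval.  At an extremum of the height any regular
   parametrization has tangent orthogonal to [e^{i th}], so these two
   distinct points are the endpoints of the [th]-diameter and the centrix is
   the even part of [gam].  A point reflection exchanges maximizers and
   minimizers of the height, which forces its centre to be the midpoint of
   every diameter; conversely a constant even part [c0] means
   [gam (th + PI) = 2 c0 - gam th], and then the odd part is [gam - c0]. *)

From Stdlib Require Import Reals Lra Lia ZArith FunctionalExtensionality.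
From Coquelicot Require Import Coquelicot.
Open Scope R_scope.

Lemma is_derive_max_eq0 (f : R -> R) t l :
  is_derive f t l -> (forall u, f u <= f t) -> l = 0.
Proof.
  intros Hd Hmax. apply is_derive_Reals in Hd.
  change (derive_pt f t (exist _ l Hd) = 0).
  apply (deriv_maximum f (t - 1) (t + 1)); [lra | lra | intros; apply Hmax].
Qed.

Lemma is_derive_min_eq0 (f : R -> R) t l :
  is_derive f t l -> (forall u, f t <= f u) -> l = 0.
Proof.
  intros Hd Hmin.
  enough (- l = 0) by lra.
  apply (is_derive_max_eq0 (fun u => - f u) t); [exact (is_derive_opp f t l Hd) |].
  intros u; specialize (Hmin u); lra.
Qed.

Lemma periodic_nat (L : R) (g : R -> pt) :
  (forall t, g (t + L) = g t) -> forall n t, g (t + INR n * L) = g t.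
Proof.
  intros Hp n; induction n as [|n IH]; intros t.
  - simpl; f_equal; ring.
  - rewrite S_INR.
    replace (t + (INR n + 1) * L) with (t + INR n * L + L) by ring.
    now rewrite Hp.
Qed.

Lemma periodic_Z (L : R) (g : R -> pt) :
  (forall t, g (t + L) = g t) -> forall k t, g (t + IZR k * L) = g t.
Proof.
  intros Hp k t.
  destruct (Z_le_gt_dec 0 k) as [Hk | Hk].
  - rewrite <- (Z2Nat.id k Hk), <- INR_IZR_INZ. now apply periodic_nat.
  - replace k with (- Z.of_nat (Z.to_nat (- k)))%Z by lia.
    rewrite opp_IZR, <- INR_IZR_INZ.
    rewrite <- (periodic_nat L g Hp (Z.to_nat (- k)) (t + - INR (Z.to_nat (- k)) * L)).
    f_equal; ring.
Qed.

Lemma exists_shift_into_period (s a L : R) :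
  0 < L -> exists k : Z, a <= s + IZR k * L < a + L.
Proof.
  intros HL.
  destruct (base_Int_part ((s - a) / L)) as [H1 H2].
  exists (- Int_part ((s - a) / L))%Z.
  rewrite opp_IZR. set (n := IZR (Int_part ((s - a) / L))) in *.
  assert (E : s - a = (s - a) / L * L) by (field; lra).
  split.
  - assert (n * L <= (s - a) / L * L) by (apply Rmult_le_compat_r; lra). lra.
  - assert ((s - a) / L * L < (n + 1) * L) by (apply Rmult_lt_compat_r; lra). lra.
Qed.

Lemma pt_eq (p q : pt) : fst p = fst q -> snd p = snd q -> p = q.
Proof. destruct p, q; simpl; intros; subst; auto. Qed.

Lemma pdot_reflect (z p e : pt) :
  pdot (psub (pscale 2 z) p) e = 2 * pdot z e - pdot p e.
Proof. unfold pdot, psub, pscale; simpl; ring. Qed.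

Lemma even_part_const_antipode (gam : R -> pt) c0 th :
  even_part gam th = c0 -> gam (th + PI) = psub (pscale 2 c0) (gam th).
Proof.
  unfold even_part, pscale, padd, psub; intros E; subst c0.
  apply pt_eq; simpl; field.
Qed.

Lemma even_part_const_odd_part (gam : R -> pt) c0 th :
  even_part gam th = c0 -> odd_part gam th = psub (gam th) c0.
Proof.
  unfold odd_part, even_part, pscale, padd, psub; intros E; subst c0.
  apply pt_eq; simpl; field.
Qed.

Lemma reflect_height_max (O : pset) (z e b : pt) :
  (forall p, O p -> O (psub (pscale 2 z) p)) ->
  (forall p, O p -> pdot b e <= pdot p e) ->
  forall p, O p -> pdot p e <= pdot (psub (pscale 2 z) b) e.
Proof.
  intros Hz Hb p Hp. specialize (Hb _ (Hz p Hp)).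
  rewrite pdot_reflect in *. lra.
Qed.

Lemma reflect_height_min (O : pset) (z e a : pt) :
  (forall p, O p -> O (psub (pscale 2 z) p)) ->
  (forall p, O p -> pdot p e <= pdot a e) ->
  forall p, O p -> pdot (psub (pscale 2 z) a) e <= pdot p e.
Proof.
  intros Hz Ha p Hp. specialize (Ha _ (Hz p Hp)).
  rewrite pdot_reflect in *. lra.
Qed.

Lemma is_derive_sub_const (f : R -> R) k t :
  ex_derive f t -> is_derive (fun u => f u - k) t (Derive f t).
Proof.
  intros Hf. rewrite <- (minus_zero_r (Derive f t)).
  exact (is_derive_minus f (fun _ => k) t _ _ (Derive_correct _ _ Hf) (is_derive_const k t)).
Qed.

Lemma is_derive_pdot_expi (g : R -> pt) th t :
  derivable2 g t ->
  is_derive (fun u => pdot (g u) (expi th)) t (pdot (dcurve g t) (expi th)).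
Proof.
  intros [Hx Hy].
  apply (is_derive_plus (fun u => cx g u * cos th) (fun u => cy g u * sin th));
    [exact (is_derive_scal_l _ t _ (cos th) (Derive_correct _ _ Hx))
    |exact (is_derive_scal_l _ t _ (sin th) (Derive_correct _ _ Hy))].
Qed.

Section SupportParametrization.

Variables (O : pset) (gam : R -> pt).
Hypothesis Hsp : support_param O gam.

Lemma support_param_in (t : R) : O (gam t).
Proof. destruct Hsp as [[_ [_ [_ HO]]] _]. apply HO; eauto. Qed.

Lemma support_param_cover (p : pt) : O p -> exists t, gam t = p.
Proof. destruct Hsp as [[_ [_ [_ HO]]] _]. apply HO. Qed.

Lemma support_param_height_max (th s : R) :
  pdot (gam s) (expi th) <= pdot (gam th) (expi th).
Proof.
  destruct Hsp as [[HL [Hp _]] [Hd Heq]].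
  destruct (exists_shift_into_period s (th - PI) (2 * PI) HL) as [k Hk].
  rewrite <- (periodic_Z _ gam Hp k s).
  set (s' := s + IZR k * (2 * PI)) in *.
  set (f := fun u => pdot (gam u) (expi th)).
  set (df := fun u => pnorm (dcurve gam u) * sin (th - u)).
  assert (Hdf : forall u, is_derive f u (df u)).
  { intros u. replace (df u) with (pdot (dcurve gam u) (expi th)).
    - now apply is_derive_pdot_expi.
    - unfold df; rewrite (Heq u) at 1.
      unfold pdot, pscale, iexpi, expi; simpl; rewrite sin_minus; ring. }
  assert (Hcont : forall u, continuity_pt f u).
  { intros u. apply derivable_continuous_pt.
    exists (df u). apply is_derive_Reals, Hdf. }
  assert (Hspeed : forall u, 0 <= pnorm (dcurve gam u)) by (intros; apply sqrt_pos).
  change (f s' <= f th).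
  destruct (Rle_dec s' th) as [Hle | Hgt].
  - destruct (MVT_gen f s' th df) as [u [Hu Hmvt]];
      [intros; apply Hdf | intros; apply Hcont |].
    rewrite Rmin_left, Rmax_right in Hu by lra.
    assert (0 <= df u) by (apply Rmult_le_pos; [apply Hspeed | apply sin_ge_0; lra]).
    assert (0 <= df u * (th - s')) by (apply Rmult_le_pos; lra). lra.
  - destruct (MVT_gen f th s' df) as [u [Hu Hmvt]];
      [intros; apply Hdf | intros; apply Hcont |].
    rewrite Rmin_left, Rmax_right in Hu by lra.
    assert (df u <= 0).
    { unfold df. replace (th - u) with (- (u - th)) by ring. rewrite sin_neg.
      assert (0 <= sin (u - th)) by (apply sin_ge_0; lra).
      assert (0 <= pnorm (dcurve gam u) * sin (u - th)) by (apply Rmult_le_pos; auto).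
      lra. }
    assert (0 <= - df u * (s' - th)) by (apply Rmult_le_pos; lra). lra.
Qed.

Lemma support_param_height_min (th s : R) :
  pdot (gam (th + PI)) (expi th) <= pdot (gam s) (expi th).
Proof.
  assert (M := support_param_height_max (th + PI) s).
  unfold pdot, expi in *.
  rewrite cos_plus, sin_plus, cos_PI, sin_PI in M. simpl in *. nra.
Qed.

Lemma support_param_antipodal_neq (th : R) : gam th <> gam (th + PI).
Proof.
  destruct Hsp as [[HL [Hp [Hinj _]]] _]. intros E.
  destruct (exists_shift_into_period th 0 (2 * PI) HL) as [k Hk].
  rewrite <- (periodic_Z _ gam Hp k th), <- (periodic_Z _ gam Hp k (th + PI)) in E.
  replace (th + PI + IZR k * (2 * PI)) with (th + IZR k * (2 * PI) + PI) in E by ring.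
  set (t := th + IZR k * (2 * PI)) in *.
  assert (HPI := PI_RGT_0).
  destruct (Rlt_dec t PI).
  - assert (t = t + PI) by (apply Hinj; auto; lra). lra.
  - replace (t + PI) with (t - PI + 2 * PI) in E by ring.
    rewrite Hp in E.
    assert (t = t - PI) by (apply Hinj; auto; lra). lra.
Qed.

Lemma support_param_translate (c0 : pt) :
  support_param (translate_neg O c0) (fun t => psub (gam t) c0).
Proof.
  destruct Hsp as [[HL [Hp [Hinj HO]]] [Hd Heq]].
  assert (Dx : forall t, is_derive (cx (fun u => psub (gam u) c0)) t (Derive (cx gam) t))
    by (intros t; apply is_derive_sub_const, (Hd t)).
  assert (Dy : forall t, is_derive (cy (fun u => psub (gam u) c0)) t (Derive (cy gam) t))
    by (intros t; apply is_derive_sub_const, (Hd t)).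
  assert (Dc : forall t, dcurve (fun u => psub (gam u) c0) t = dcurve gam t).
  { intros t. unfold dcurve.
    now rewrite (is_derive_unique _ _ _ (Dx t)), (is_derive_unique _ _ _ (Dy t)). }
  split; [split; [exact HL | split; [| split]] | split].
  - intros t. now rewrite Hp.
  - intros s t Hs Ht E. apply Hinj; auto.
    apply pt_eq; [apply (f_equal fst) in E | apply (f_equal snd) in E];
      unfold psub in E; simpl in E; lra.
  - intros p. unfold translate_neg. rewrite HO.
    split; intros [t Ht]; exists t.
    + rewrite Ht. unfold padd, psub; apply pt_eq; simpl; ring.
    + rewrite <- Ht. unfold padd, psub; apply pt_eq; simpl; ring.
  - intros t. split; eexists; [apply Dx | apply Dy].
  - intros t. rewrite Dc. apply Heq.
Qed.

Lemma even_part_const_central (c0 : pt) :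
  (forall th, even_part gam th = c0) ->
  forall p, O p -> O (psub (pscale 2 c0) p).
Proof.
  intros Hc0 p Hp. destruct (support_param_cover p Hp) as [t <-].
  rewrite <- (even_part_const_antipode gam c0 t (Hc0 t)).
  apply support_param_in.
Qed.

End SupportParametrization.

Lemma tangent_perp_of_height_extremal (O : pset) th r :
  is_oval O -> O r ->
  ((forall p, O p -> pdot p (expi th) <= pdot r (expi th)) \/
   (forall p, O p -> pdot r (expi th) <= pdot p (expi th))) ->
  tangent_perp O th r.
Proof.
  intros [L [g [[Hreg [HC1 Hnz]] _]]] Hr Hext.
  pose proof Hreg as [_ [_ [_ HO]]].
  destruct (proj1 (HO r) Hr) as [t Ht].
  split; [exact Hr |].
  exists (dcurve g t).
  split; [exists L, g, t; split; [exact (conj Hreg (conj HC1 Hnz)) | now split] |].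
  destruct HC1 as [C1x C1y].
  assert (Hd := is_derive_pdot_expi g th t (conj (proj1 (C1x t)) (proj1 (C1y t)))).
  assert (Hon : forall u, O (g u)) by (intros u; apply HO; eauto).
  destruct Hext as [H | H].
  - apply (is_derive_max_eq0 _ t _ Hd). intros u. rewrite Ht. now apply H.
  - apply (is_derive_min_eq0 _ t _ Hd). intros u. rewrite Ht. now apply H.
Qed.

Section Centrix.

Variables (O : pset) (gam c : R -> pt).
Hypotheses (Hov : is_oval O) (Hsp : support_param O gam) (Hc : is_centrix O c).

Lemma support_param_is_height_max (th : R) :
  forall p, O p -> pdot p (expi th) <= pdot (gam th) (expi th).
Proof.
  intros p Hp. destruct (support_param_cover O gam Hsp p Hp) as [s <-].
  now apply (support_param_height_max O).
Qed.

Lemma support_param_is_height_min (th : R) :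
  forall p, O p -> pdot (gam (th + PI)) (expi th) <= pdot p (expi th).
Proof.
  intros p Hp. destruct (support_param_cover O gam Hsp p Hp) as [s <-].
  now apply (support_param_height_min O).
Qed.

Lemma centrix_diameter_endpoints (th : R) (p q : pt) :
  p <> q -> (forall r, tangent_perp O th r <-> r = p \/ r = q) ->
  (p = gam th /\ q = gam (th + PI)) \/ (p = gam (th + PI) /\ q = gam th).
Proof.
  intros Hpq Hiff.
  assert (Ta : gam th = p \/ gam th = q).
  { apply Hiff, tangent_perp_of_height_extremal;
      [exact Hov | apply (support_param_in O gam Hsp) | left; apply support_param_is_height_max]. }
  assert (Tb : gam (th + PI) = p \/ gam (th + PI) = q).
  { apply Hiff, tangent_perp_of_height_extremal;
      [exact Hov | apply (support_param_in O gam Hsp) | right; apply support_param_is_height_min]. }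
  assert (D := support_param_antipodal_neq O gam Hsp th).
  destruct Ta as [Ea | Ea], Tb as [Eb | Eb];
    [congruence | left; auto | right; auto | congruence].
Qed.

Lemma tangent_perp_support_param (th : R) (r : pt) :
  tangent_perp O th r <-> r = gam th \/ r = gam (th + PI).
Proof.
  destruct (Hc th) as [p [q [Hpq [Hiff _]]]].
  rewrite Hiff.
  destruct (centrix_diameter_endpoints th p q Hpq Hiff) as [[-> ->] | [-> ->]]; tauto.
Qed.

Lemma centrix_even_part (th : R) : c th = even_part gam th.
Proof.
  destruct (Hc th) as [p [q [Hpq [Hiff ->]]]].
  unfold midpoint, even_part, padd.
  destruct (centrix_diameter_endpoints th p q Hpq Hiff) as [[-> ->] | [-> ->]];
    [reflexivity | f_equal; f_equal; ring].
Qed.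

Lemma central_even_part (z : pt) :
  (forall p, O p -> O (psub (pscale 2 z) p)) ->
  forall th, even_part gam th = z.
Proof.
  intros Hz th.
  set (a := gam th) in *. set (b := gam (th + PI)) in *.
  assert (Hr : psub (pscale 2 z) b = a \/ psub (pscale 2 z) b = b).
  { apply tangent_perp_support_param, tangent_perp_of_height_extremal; [exact Hov | | left].
    - apply Hz, (support_param_in O gam Hsp).
    - apply (reflect_height_max O); [exact Hz | apply support_param_is_height_min]. }
  assert (Hr' : psub (pscale 2 z) a = a \/ psub (pscale 2 z) a = b).
  { apply tangent_perp_support_param, tangent_perp_of_height_extremal; [exact Hov | | right].
    - apply Hz, (support_param_in O gam Hsp).
    - apply (reflect_height_min O); [exact Hz | apply support_param_is_height_max]. }
  assert (D := support_param_antipodal_neq O gam Hsp th). fold a b in D.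
  unfold even_part; fold a b. clearbody a b.
  destruct a as [a1 a2], b as [b1 b2], z as [z1 z2].
  unfold psub, pscale, padd in *; simpl in *.
  destruct Hr as [E | E], Hr' as [E' | E']; injection E; injection E'; intros;
    first [apply pt_eq; simpl; lra | exfalso; apply D, pt_eq; simpl; lra].
Qed.

End Centrix.

Theorem mainTheorem13 (O : pset) (gam : R -> pt) (c : R -> pt) :
  is_oval O ->
  support_param O gam ->
  is_centrix O c ->
  (forall th, c th = even_part gam th) /\
  ((exists c0 : pt, forall th, c th = c0) <-> is_central O) /\
  (forall c0 : pt, (forall th, c th = c0) ->
     support_param (translate_neg O c0) (odd_part gam)).
Proof.
  intros Hov Hsp Hc.
  assert (Heven := centrix_even_part O gam c Hov Hsp Hc).
  assert (Hconst : forall c0, (forall th, c th = c0) -> forall th, even_part gam th = c0)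
    by (intros c0 Hc0 th; now rewrite <- Heven).
  split; [exact Heven | split; [split |]].
  - intros [c0 Hc0]. exists c0.
    exact (even_part_const_central O gam Hsp c0 (Hconst c0 Hc0)).
  - intros [z Hz]. exists z. intros th.
    rewrite Heven. exact (central_even_part O gam c Hov Hsp Hc z Hz th).
  - intros c0 Hc0.
    replace (odd_part gam) with (fun t => psub (gam t) c0).
    + apply support_param_translate, Hsp.
    + apply functional_extensionality; intros th.
      symmetry; apply even_part_const_odd_part, Hconst, Hc0.
Qed.
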